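(* Let $f(X)=N(N-1)\sum_{i=1}^{\ell}\beta_i\,t(H_i,X)$ be a subgraph-counting function. Let $X,Y\in\{0,1\}^n$ differ only in a single index $k$, let $j$ be an index, and let $e_j,e_k$ be the edges (vertex pairs) corresponding to $j,k$. If $e_j$ and $e_k$ share a common vertex, then $$|\partial_jf(X)-\partial_jf(Y)|\le\sum_{i=1}^{\ell}\frac{2|\beta_i|\,|E(H_i)|^2}{\sqrt n}.$$ If $e_j$ and $e_k$ do not share a common vertex, then $$|\partial_jf(X)-\partial_jf(Y)|\le\sum_{i=1}^{\ell}\frac{6|\beta_i|\,|E(H_i)|^2}{n}.$$
   Context: $n=\binom N2$; $X\in\{0,1\}^n$ is identified with a simple graph on $[N]$, coordinates indexed by unordered vertex pairs. For a finite simple graph $H$ on $[m]$, $t(H,X)$ is the number of injective homomorphisms $H\to X$ divided by $N(N-1)\cdots(N-m+1)$. $\partial_jf(X)=\frac12\big(f(X\text{ with coordinate }j\text{ set to }1)-f(X\text{ with coordinate }j\text{ set to }0)\big)$. *)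

From HB Require Import structures.
From mathcomp Require Import all_boot all_order all_algebra.
Set Implicit Arguments. Unset Strict Implicit. Unset Printing Implicit Defensive.
Import Order.TTheory GRing.Theory Num.Theory.
Local Open Scope ring_scope.

(* Unordered pairs of distinct vertices of [N] (= 'I_N): the n = 'C(N,2)
   coordinates of {0,1}^n. *)
Definition upair (N : nat) := {e : {set 'I_N} | #|e| == 2%N}.
HB.instance Definition _ N := Finite.copy (upair N) {e : {set 'I_N} | #|e| == 2%N}.

(* A simple graph on [N], identified with X in {0,1}^n. *)
Definition graph (N : nat) := {ffun upair N -> bool}.

Definition is_edge N (X : graph N) (s : {set 'I_N}) : bool :=
  [exists e : upair N, (val e == s) && X e].

Definition nedges m (H : graph m) : nat := #|[pred e : upair m | H e]|.

Definition inj_hom m N (H : graph m) (X : graph N) : nat :=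
  #|[pred phi : {ffun 'I_m -> 'I_N} | injectiveb phi &&
     [forall e : upair m, H e ==> is_edge X (phi @: val e)]]|.

Definition tdens (R : fieldType) m N (H : graph m) (X : graph N) : R :=
  (inj_hom H X)%:R / (N ^_ m)%:R.

Definition subgraph_count (R : fieldType) N (l : nat) (m : 'I_l -> nat)
  (H : forall i, graph (m i)) (beta : 'I_l -> R) (X : graph N) : R :=
  (N * N.-1)%:R * \sum_(i < l) beta i * tdens R (H i) X.

Definition setc N (X : graph N) (j : upair N) (b : bool) : graph N :=
  [ffun e => if e == j then b else X e].

Definition dpart (R : fieldType) N (f : graph N -> R) (j : upair N) (X : graph N) : R :=
  (f (setc X j true) - f (setc X j false)) / 2%:R.

(* Write c = N(N-1).  Up to the factor c/2, the difference d_j f(X) - d_j f(Y)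
   is sum_i beta_i Delta_i / N^_(m_i), where Delta_i is a signed count of
   injections phi : H_i -> [N].  Since X and Y differ only at k, phi
   contributes nothing unless it maps some edge of H_i onto e_j and some edge
   onto e_k, and then it contributes at most 1.  Fixing the two edges of H_i
   (|E(H_i)|^2 choices), such a phi is pinned on the 3 endpoints of
   e_j u e_k when they share a vertex, and on the 4 endpoints up to the
   4 orientations otherwise; hence there are at most |E|^2 N^_m / N^_3,
   resp. 4 |E|^2 N^_m / N^_4, of them.  The bounds follow from
   c / (2 N^_3) = 1 / (2 (N - 2)) <= 2 / sqrt n  and  4 c / (2 N^_4) <= 6 / n. *)

From HB Require Import structures.
From mathcomp Require Import all_boot all_order all_algebra all_fingroup zify ring lra.
Import Order.TTheory GRing.Theory Num.Theory.

Set Implicit Arguments. Unset Strict Implicit. Unset Printing Implicit Defensive.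

Lemma leq_card_bigcup (I : Type) (T : finType) (r : seq I) (P : pred I) (F : I -> {set T}) :
  #|\bigcup_(i <- r | P i) F i| <= \sum_(i <- r | P i) #|F i|.
Proof.
elim/big_ind2: _ => [|p A q B leA leB|//]; first by rewrite cards0.
by rewrite (leq_trans (leq_card_setU A B)) ?leq_add.
Qed.

Lemma cards2_other (T : finType) (A : {set T}) z : #|A| == 2 -> z \in A ->
  exists2 x, x != z & A = [set z; x].
Proof.
case/cards2P => p [q [pq ->]]; rewrite !inE => /orP[] /eqP ->.
  by exists q; rewrite // eq_sym.
by exists p; rewrite // setUC.
Qed.

Lemma in_set2_neq (T : finType) (z x t : T) : t \in [set z; x] -> t != z -> t = x.
Proof. by rewrite !inE => /orP[/eqP->|/eqP//]; rewrite eqxx. Qed.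

Lemma inj_set2_values (aT rT : finType) (f : aT -> rT) p q (x1 x2 : rT) :
  injective f -> p != q -> f p \in [set x1; x2] -> f q \in [set x1; x2] ->
  (f p, f q) \in [:: (x1, x2); (x2, x1)].
Proof.
move=> f_inj; rewrite -(inj_eq f_inj) !inE => pq /orP[]/eqP fp /orP[]/eqP fq.
all: by move: pq; rewrite fp fq ?eqxx ?orbT.
Qed.

Section Pinned.
Variables aT rT : finType.
Implicit Types (cs : seq (aT * rT)) (phi : {ffun aT -> rT}).

Definition pinned cs : {set {ffun aT -> rT}} :=
  [set phi : {ffun aT -> rT} | injectiveb phi & all (fun p => phi p.1 == p.2) cs].

Lemma card_pinned_nil : #|pinned [::]| = #|rT| ^_ #|aT|.
Proof. by rewrite -card_inj_ffuns; apply: eq_card => phi; rewrite !inE andbT. Qed.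

Lemma pinned_cons phi v y cs :
  (phi \in pinned ((v, y) :: cs)) = (phi v == y) && (phi \in pinned cs).
Proof. by rewrite !inE /= andbCA. Qed.

Lemma pinned_fresh phi cs v :
  phi \in pinned cs -> v \notin map fst cs -> phi v \notin map snd cs.
Proof.
rewrite inE => /andP[/injectiveP phi_inj /allP phi_cs] v_cs.
apply: contra v_cs => /mapP[[u x] ux /= vx].
by have /eqP := phi_cs _ ux; rewrite /= -vx => /phi_inj <-; apply: (map_f fst ux).
Qed.

Lemma card_pinned_swap v y z cs : y \notin map snd cs -> z \notin map snd cs ->
  #|pinned ((v, y) :: cs)| <= #|pinned ((v, z) :: cs)|.
Proof.
(* Composing with the transposition (y z) is injective and maps the left set into the right one. *)
move=> y_cs z_cs; pose g phi := [ffun i => tperm y z (phi i)].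
have g_inj : injective g.
  move=> p q /ffunP gpq; apply/ffunP => i.
  by apply: (perm_inj (s := tperm y z)); have := gpq i; rewrite !ffunE.
rewrite -(card_imset _ g_inj); apply/subset_leq_card/subsetP => _ /imsetP[phi + ->].
rewrite !inE => /and3P[/injectiveP phi_inj /eqP phi_v phi_cs].
apply/and3P; split.
- by apply/injectiveP => a b; rewrite !ffunE => /perm_inj/phi_inj.
- by rewrite ffunE phi_v tpermL.
apply/allP => -[u x] ux; rewrite ffunE /=; have /eqP -> := allP phi_cs _ ux.
have x_cs : x \in map snd cs by apply: map_f ux.
by rewrite tpermD // eq_sym; [apply: (memPn y_cs) | apply: (memPn z_cs)].
Qed.

Lemma card_pinned_cons v y cs : v \notin map fst cs -> y \notin map snd cs ->
  #|pinned cs| = #|~: [set x in map snd cs]| * #|pinned ((v, y) :: cs)|.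
Proof.
move=> v_cs y_cs; rewrite -sum1_card (partition_big (fun phi => phi v) predT) //=.
rewrite (bigID (mem (map snd cs))) /= big1 => [|z z_cs]; last first.
  apply: big_pred0 => phi; apply/negbTE/negP => /andP[phi_pin /eqP phi_v].
  by have := pinned_fresh phi_pin v_cs; rewrite phi_v z_cs.
rewrite /= add0n -sum_nat_const; apply: eq_big => [z|z]; first by rewrite !inE.
move=> z_cs; transitivity #|pinned ((v, z) :: cs)|.
  by rewrite -sum1_card; apply: eq_bigl => phi; rewrite pinned_cons andbC.
by apply/eqP; rewrite eqn_leq !card_pinned_swap.
Qed.

Lemma card_pinned_ffact cs : uniq (map fst cs) ->
  #|pinned cs| * #|rT| ^_ (size cs) <= #|rT| ^_ #|aT|.
Proof.
elim: cs => [|[v y] cs IHcs] /=; first by rewrite muln1 card_pinned_nil.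
case/andP=> v_cs /IHcs; have [y_cs _|y_cs] := boolP (y \in map snd cs).
  suff -> : pinned ((v, y) :: cs) = set0 by rewrite cards0.
  apply/setP => phi; rewrite in_set0 pinned_cons; apply/negP => /andP[/eqP phi_v].
  by move/pinned_fresh/(_ v_cs); rewrite phi_v y_cs.
apply: leq_trans; rewrite (card_pinned_cons v_cs y_cs) ffactnSr.
rewrite [_ * #|pinned _|]mulnC -mulnA leq_mul // mulnC leq_mul // leq_subLR.
have <- := cardsC [set x in map snd cs].
by rewrite leq_add2r cardsE (leq_trans (card_size _)) ?size_map.
Qed.

Lemma card_pinned_cover (S : seq (seq (aT * rT))) r (A : {set {ffun aT -> rT}}) :
  A \subset \bigcup_(cs <- S) pinned cs ->
  {in S, forall cs, uniq (map fst cs) /\ size cs = r} ->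
  #|A| * #|rT| ^_ r <= size S * #|rT| ^_ #|aT|.
Proof.
move=> A_sub S_ok; have card_A := leq_trans (subset_leq_card A_sub) (leq_card_bigcup _ _ _).
apply: leq_trans (leq_mul card_A (leqnn _)) _.
rewrite -sum1_size !big_distrl /= !big_seq; apply: leq_sum => cs cs_S.
by have [uniq_cs <-] := S_ok cs cs_S; rewrite mul1n card_pinned_ffact.
Qed.

End Pinned.

Section PairImages.
Variables aT rT : finType.
Implicit Types (a b : {set aT}) (J K : {set rT}).

Definition inj_onto (a : {set aT}) (J : {set rT}) (b : {set aT}) (K : {set rT}) :
    {set {ffun aT -> rT}} :=
  [set phi : {ffun aT -> rT} | [&& injectiveb phi, phi @: a == J & phi @: b == K]].

Lemma card_inj_onto_meet a J b K : #|J| == 2 -> #|K| == 2 -> J != K -> J :&: K != set0 ->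
  #|inj_onto a J b K| * #|rT| ^_ 3 <= #|rT| ^_ #|aT|.
Proof.
move=> J2 K2 JK /set0Pn[z]; rewrite inE => /andP[zJ zK].
have [x xz EJ] := cards2_other J2 zJ; have [y yz EK] := cards2_other K2 zK.
have xy : x != y by apply: contraNneq JK => exy; rewrite EJ EK exy.
have [->|[phi0]] := set_0Vmem (inj_onto a J b K); first by rewrite cards0.
rewrite inE => /and3P[/injectiveP inj0 /eqP a_J /eqP b_K].
have /imsetP[w wa zw] : z \in phi0 @: a by rewrite a_J.
have /imsetP[w' w'b zw'] : z \in phi0 @: b by rewrite b_K.
have /imsetP[u ua xu] : x \in phi0 @: a by rewrite a_J EJ !inE eqxx orbT.
have /imsetP[v vb yv] : y \in phi0 @: b by rewrite b_K EK !inE eqxx orbT.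
have wb : w \in b by rewrite (inj0 w w') -?zw.
rewrite -[_ ^_ #|aT|]mul1n; apply: (card_pinned_cover (S := [:: [:: (w, z); (u, x); (v, y)]])).
  apply/subsetP => phi; rewrite inE => /and3P[/injectiveP phi_inj /eqP phi_a /eqP phi_b].
  rewrite big_seq1 !pinned_cons inE.
  have phi_J t : t \in a -> phi t \in [set z; x] by rewrite -EJ -phi_a; apply: imset_f.
  have phi_K t : t \in b -> phi t \in [set z; y] by rewrite -EK -phi_b; apply: imset_f.
  have phi_w : phi w = z.
    apply/eqP; apply: contraNT xy => phi_w_z.
    by rewrite -(in_set2_neq (phi_J w wa) phi_w_z) (in_set2_neq (phi_K w wb) phi_w_z).
  have phi_u : phi u = x.
    by apply: in_set2_neq (phi_J u ua) _; rewrite -phi_w (inj_eq phi_inj) -(inj_eq inj0) -zw -xu.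
  have phi_v : phi v = y.
    by apply: in_set2_neq (phi_K v vb) _; rewrite -phi_w (inj_eq phi_inj) -(inj_eq inj0) -zw -yv.
  by rewrite phi_w phi_u phi_v !eqxx andbT; apply/injectiveP.
move=> cs; rewrite inE => /eqP-> /=; split=> //.
by rewrite !inE negb_or -!(inj_eq inj0) -zw -xu -yv eq_sym xz eq_sym yz xy.
Qed.

Lemma card_inj_onto_disjoint a J b K : #|J| == 2 -> #|K| == 2 -> J :&: K = set0 ->
  #|inj_onto a J b K| * #|rT| ^_ 4 <= 4 * #|rT| ^_ #|aT|.
Proof.
move=> /cards2P[x1 [x2 [x12 EJ]]] /cards2P[y1 [y2 [y12 EK]]] JK0.
have [->|[phi0]] := set_0Vmem (inj_onto a J b K); first by rewrite cards0.
rewrite inE => /and3P[/injectiveP inj0 /eqP a_J /eqP b_K].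
have /imsetP[a1 a1a x1a1] : x1 \in phi0 @: a by rewrite a_J EJ !inE eqxx.
have /imsetP[a2 a2a x2a2] : x2 \in phi0 @: a by rewrite a_J EJ !inE eqxx orbT.
have /imsetP[b1 b1b y1b1] : y1 \in phi0 @: b by rewrite b_K EK !inE eqxx.
have /imsetP[b2 b2b y2b2] : y2 \in phi0 @: b by rewrite b_K EK !inE eqxx orbT.
have JK_neq (s t : rT) : s \in J -> t \in K -> s != t.
  move=> sJ tK; apply/eqP => st; rewrite -st in tK.
  by have := in_setI s J K; rewrite JK0 in_set0 sJ tK.
have img_neq s t : phi0 s != phi0 t -> s != t by apply: contraNneq => ->.
have JK_img_neq s t : phi0 s \in J -> phi0 t \in K -> s != t.
  by move=> sJ tK; apply/img_neq/JK_neq.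
have a12 : a1 != a2 by rewrite img_neq // -x1a1 -x2a2.
have b12 : b1 != b2 by rewrite img_neq // -y1b1 -y2b2.
have uniq_ab : uniq [:: a1; a2; b1; b2].
  by rewrite /= !inE !negb_or a12 b12 !JK_img_neq // -?x1a1 -?x2a2 -?y1b1 -?y2b2 ?EJ ?EK !inE eqxx ?orbT.
pose S := [seq [:: (a1, p.1); (a2, p.2); (b1, q.1); (b2, q.2)]
          | p <- [:: (x1, x2); (x2, x1)], q <- [:: (y1, y2); (y2, y1)]].
apply: (card_pinned_cover (S := S)); last first.
  by move=> _ /allpairsP[[p q] [_ _ ->]].
apply/subsetP => phi; rewrite inE => /and3P[/injectiveP phi_inj /eqP phi_a /eqP phi_b].
have phi_J t : t \in a -> phi t \in [set x1; x2] by rewrite -EJ -phi_a; apply: imset_f.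
have phi_K t : t \in b -> phi t \in [set y1; y2] by rewrite -EK -phi_b; apply: imset_f.
have phi_S : [:: (a1, phi a1); (a2, phi a2); (b1, phi b1); (b2, phi b2)] \in S.
  apply/allpairsP; exists ((phi a1, phi a2), (phi b1, phi b2)).
  by split; rewrite //= inj_set2_values ?phi_J ?phi_K.
rewrite (big_rem _ phi_S) in_setU /= !pinned_cons !eqxx inE andbT.
by apply/orP; left; apply/injectiveP.
Qed.
End PairImages.

Local Open Scope ring_scope.

Lemma natr_card (R : pzSemiRingType) (T : finType) (A : {pred T}) :
  #|A|%:R = \sum_t (t \in A)%:R :> R.
Proof. by rewrite -sum1_card natr_sum big_mkcond; apply: eq_bigr => t _; case: (t \in A). Qed.

Section EdgeUpdate.
Variables (N : nat) (j : upair N).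
Implicit Types (Z : graph N) (s : {set 'I_N}).

Lemma is_edge_setc Z b s : s != val j -> is_edge (setc Z j b) s = is_edge Z s.
Proof.
move=> sj; apply: eq_existsb => e; rewrite ffunE.
by case: (eqVneq e j) => [->|//]; rewrite eq_sym (negbTE sj).
Qed.

Lemma is_edge_setc_false Z : is_edge (setc Z j false) (val j) = false.
Proof. by apply/existsP => -[e /andP[/eqP ej]]; rewrite ffunE (val_inj ej) eqxx. Qed.

Lemma is_edge_agree Z Z' s : (forall e, e != j -> Z e = Z' e) -> s != val j ->
  is_edge Z s = is_edge Z' s.
Proof.
move=> ZZ' sj; apply: eq_existsb => e; case: (eqVneq e j) => [->|/ZZ'->//].
by rewrite eq_sym (negbTE sj).
Qed.

Lemma dpart_agree (R : fieldType) (g : graph N -> R) Z Z' :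
  (forall e, e != j -> Z e = Z' e) -> dpart g j Z = dpart g j Z'.
Proof.
move=> ZZ'; have setc_eq b : setc Z j b = setc Z' j b.
  by apply/ffunP => e; rewrite !ffunE; case: eqVneq => // /ZZ'.
by rewrite /dpart !setc_eq.
Qed.
End EdgeUpdate.

Section Touching.
Variables (m N : nat) (H : graph m) (j k : upair N).
Implicit Types (phi : {ffun 'I_m -> 'I_N}) (Z : graph N).

Definition maps_onto phi (s : {set 'I_N}) := [exists e, H e && (phi @: val e == s)].

Definition touching : {set {ffun 'I_m -> 'I_N}} :=
  [set phi : {ffun 'I_m -> 'I_N} | [&& injectiveb phi, maps_onto phi (val j) & maps_onto phi (val k)]].

Lemma card_touching_le r w :
  (forall a b : upair m, H a -> H b ->
     (#|inj_onto (val a) (val j) (val b) (val k)| * N ^_ r <= w * N ^_ m)%N) ->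
  (#|touching| * N ^_ r <= w * nedges H ^ 2 * N ^_ m)%N.
Proof.
move=> onto_le.
have sub : touching \subset
    \bigcup_(a | H a) \bigcup_(b | H b) inj_onto (val a) (val j) (val b) (val k).
  apply/subsetP => phi; rewrite inE => /and3P[phi_inj].
  move=> /existsP[a /andP[Ha phi_a]] /existsP[b /andP[Hb phi_b]].
  by apply/bigcupP; exists a => //; apply/bigcupP; exists b; rewrite // inE phi_inj phi_a.
apply: leq_trans (leq_mul (leq_trans (subset_leq_card sub) (leq_card_bigcup _ _ _)) (leqnn _)) _.
apply: (@leq_trans (\sum_(a | H a) \sum_(b | H b) w * N ^_ m)).
  rewrite big_distrl; apply: leq_sum => a Ha.
  apply: leq_trans (leq_mul (leq_card_bigcup _ _ _) (leqnn _)) _.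
  by rewrite big_distrl; apply: leq_sum => b Hb; apply: onto_le.
rewrite !sum_nat_cond_const cardsE.
by apply: eq_leq; ring.
Qed.

Definition hom_on Z phi := [forall e, H e ==> is_edge Z (phi @: val e)].

Lemma hom_on_setc Z b phi : ~~ maps_onto phi (val j) -> hom_on (setc Z j b) phi = hom_on Z phi.
Proof.
move=> /existsPn phi_j; apply: eq_forallb => e; case He: (H e) => //=.
by rewrite is_edge_setc //; have := phi_j e; rewrite He.
Qed.

Lemma hom_on_setc_false Z phi : maps_onto phi (val j) -> hom_on (setc Z j false) phi = false.
Proof.
case/existsP=> e /andP[He /eqP phi_e]; apply/forallP => /(_ e).
by rewrite He phi_e is_edge_setc_false.
Qed.

Lemma hom_on_agree Z Z' phi : (forall e, e != k -> Z e = Z' e) -> ~~ maps_onto phi (val k) ->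
  hom_on Z phi = hom_on Z' phi.
Proof.
move=> ZZ' /existsPn phi_k; apply: eq_forallb => e; case He: (H e) => //=.
by apply: is_edge_agree ZZ' _; have := phi_k e; rewrite He.
Qed.

Lemma inj_hom_sum (R : pzSemiRingType) Z :
  (inj_hom H Z)%:R = \sum_(phi : {ffun 'I_m -> 'I_N}) (injectiveb phi && hom_on Z phi)%:R :> R.
Proof. exact: natr_card. Qed.

Lemma dpart_tdens_diff_le (R : realFieldType) (X Y : graph N) : (forall e, e != k -> X e = Y e) ->
  `|dpart (tdens R H) j X - dpart (tdens R H) j Y| <= #|touching|%:R / (N ^_ m)%:R / 2%:R.
Proof.
move=> XY; rewrite /dpart /tdens -!mulrBl !normrM.
rewrite [`|(N ^_ m)%:R^-1|]ger0_norm ?invr_ge0 ?ler0n // [`|2%:R^-1|]ger0_norm ?invr_ge0 ?ler0n //.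
rewrite ler_wpM2r ?invr_ge0 ?ler0n // ler_wpM2r ?invr_ge0 ?ler0n //.
rewrite !inj_hom_sum natr_card -!sumrB; apply: le_trans (ler_norm_sum _ _ _) _.
apply: ler_sum => phi _; rewrite inE.
case: (injectiveb phi) => /=; last by rewrite !subrr normr0.
have [phi_j|phi_j] := boolP (maps_onto phi (val j)); last by rewrite !hom_on_setc // !subrr normr0.
have [phi_k|phi_k] := boolP (maps_onto phi (val k)); last first.
  have XY_j b : hom_on (setc X j b) phi = hom_on (setc Y j b) phi.
    by apply: hom_on_agree phi_k => e ek; rewrite !ffunE XY.
  by rewrite !XY_j !subrr normr0.
rewrite !hom_on_setc_false // !subr0.
by case: hom_on; case: hom_on; rewrite /= ?subrr ?normr0 ?sub0r ?normrN ?subr0 ?normr_nat ?ler01.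
Qed.
End Touching.

Lemma ler_nat_ratio (R : realFieldType) (T F B P : nat) :
  (T * P <= B * F)%N -> (0 < P)%N -> T%:R / F%:R <= B%:R / P%:R :> R.
Proof.
(* F = 0 is allowed: the left-hand side is then 0, as x / 0 = 0. *)
move=> TP P0; have [->|F0] := posnP F; first by rewrite invr0 mulr0 divr_ge0.
by rewrite ler_pdivrMr ?ltr0n // mulrAC ler_pdivlMr ?ltr0n // -!natrM ler_nat.
Qed.

Lemma norm_scaled_term_le (R : realFieldType) (c b d K D : R) (T F P w E : nat) :
  0 <= c -> `|d| <= T%:R / F%:R / 2%:R -> (T * P <= w * E * F)%N -> (0 < P)%N ->
  c * w%:R / P%:R / 2%:R <= K / D -> `|c * (b * d)| <= K * `|b| * E%:R / D.
Proof.
move=> c0 d_le TP P0 coeff_le.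
have ratio : T%:R / F%:R <= (w * E)%:R / P%:R :> R by apply: ler_nat_ratio; rewrite ?mulnA.
have d_le' : `|d| <= (w * E)%:R / P%:R / 2%:R.
  by apply: le_trans d_le _; rewrite ler_wpM2r ?invr_ge0 ?ler0n.
rewrite normrM (ger0_norm c0) normrM mulrA [c * _]mulrC.
have -> : K * `|b| * E%:R / D = K / D * (`|b| * E%:R) by ring.
apply: le_trans (_ : c * w%:R / P%:R / 2%:R * (`|b| * E%:R) <= _); last first.
  by rewrite ler_wpM2r ?mulr_ge0 ?ler0n.
have -> : c * w%:R / P%:R / 2%:R * (`|b| * E%:R) = `|b| * c * ((w * E)%:R / P%:R / 2%:R).
  by rewrite natrM; ring.
by rewrite ler_wpM2l ?mulr_ge0.
Qed.

Lemma bin2_double N : ('C(N, 2) * 2 = N * N.-1)%N.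
Proof. by rewrite -[in LHS]/(2`!) bin_ffact ffactnS ffactn1. Qed.

Lemma ffact3 N : (N ^_ 3 = N * N.-1 * (N - 2))%N.
Proof. by rewrite ffactnSr ffactnS ffactn1. Qed.

Lemma ffact4 N : (N ^_ 4 = N * N.-1 * (N - 2) * (N - 3))%N.
Proof. by rewrite ffactnSr ffact3. Qed.

Lemma meet_coeff_le (R : rcfType) N : (3 <= N)%N ->
  (N * N.-1)%:R * 1%:R / (N ^_ 3)%:R / 2%:R <= 2%:R / Num.sqrt 'C(N, 2)%:R :> R.
Proof.
move=> N3; have c0 : (N * N.-1)%:R != 0 :> R by rewrite pnatr_eq0 -lt0n muln_gt0; lia.
have r0 : 0 < (N - 2)%:R :> R by rewrite ltr0n subn_gt0.
have s0 : 0 < Num.sqrt 'C(N, 2)%:R :> R by rewrite sqrtr_gt0 ltr0n bin_gt0 (leq_trans _ N3).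
have s_le : Num.sqrt 'C(N, 2)%:R <= 4%:R * (N - 2)%:R :> R.
  rewrite -[X in _ <= X]ger0_norm ?mulr_ge0 ?ler0n // -sqrtr_sqr ler_sqrt ?sqr_ge0 //.
  by rewrite -natrM -natrX ler_nat; have := bin2_double N; nia.
rewrite mulr1 ffact3 [(N * N.-1 * _)%:R]natrM invfM mulrA divff // mul1r -invfM ler_pdivlMr // mulrC.
by rewrite ler_pdivrMr ?mulr_gt0 //; lra.
Qed.

Lemma disjoint_coeff_le (R : realFieldType) N : (4 <= N)%N ->
  (N * N.-1)%:R * 4%:R / (N ^_ 4)%:R / 2%:R <= 6%:R / 'C(N, 2)%:R :> R.
Proof.
move=> N4; have c0 : 0 < (N * N.-1)%:R :> R by rewrite ltr0n muln_gt0; lia.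
have r0 : 0 < ((N - 2) * (N - 3))%:R :> R by rewrite ltr0n muln_gt0; lia.
have n_eq : 'C(N, 2)%:R = (N * N.-1)%:R / 2%:R :> R.
  by rewrite -bin2_double natrM mulfK ?pnatr_eq0.
rewrite n_eq ffact4 -mulnA [(N * N.-1 * _)%:R]natrM.
set c := (N * N.-1)%:R; set r := ((N - 2) * (N - 3))%:R.
have -> : c * 4%:R / (c * r) / 2%:R = 2%:R / r.
  by field; rewrite !pnatr_eq0; apply/and4P; split; apply/eqP; lia.
have -> : 6%:R / (c / 2%:R) = 12%:R / c.
  by field; rewrite !pnatr_eq0; apply/andP; split; apply/eqP; lia.
rewrite ler_pdivrMr // mulrAC ler_pdivlMr // /c /r -!natrM ler_nat; nia.
Qed.

Lemma dpart_subgraph_count (R : fieldType) N l (m : 'I_l -> nat)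
    (H : forall i, graph (m i)) (beta : 'I_l -> R) (j : upair N) (X : graph N) :
  dpart (subgraph_count H beta) j X =
    (N * N.-1)%:R * \sum_(i < l) beta i * dpart (tdens R (H i)) j X.
Proof.
rewrite /dpart /subgraph_count -mulrBr -mulrA -sumrB mulr_suml; congr (_ * _).
by apply: eq_bigr => i _; rewrite -mulrBr mulrA.
Qed.

Lemma upair_cardU N (j k : upair N) : (#|val j :|: val k| + #|val j :&: val k| = 4)%N.
Proof. by rewrite cardsUI (eqP (valP j)) (eqP (valP k)). Qed.

Lemma upair_cardU_le N (j k : upair N) : (#|val j :|: val k| <= N)%N.
Proof. by rewrite -[N in (_ <= N)%N]card_ord -cardsT subset_leq_card ?subsetT. Qed.

Lemma upair_neq_ge3 N (j k : upair N) : j != k -> (3 <= N)%N.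
Proof.
move=> jk; have := upair_cardU j k; have := upair_cardU_le j k.
suff : (#|val j :&: val k| <= 1)%N by lia.
rewrite leqNgt; apply: contra jk => meet2; apply/eqP/val_inj.
have meet_eq (s : upair N) : val j :&: val k \subset val s -> val j :&: val k = val s.
  by move=> sub_s; apply/eqP; rewrite eqEcard sub_s (eqP (valP s)).
by rewrite -(meet_eq j) ?subsetIl // (meet_eq k) ?subsetIr.
Qed.

Lemma upair_disjoint_ge4 N (j k : upair N) : val j :&: val k = set0 -> (4 <= N)%N.
Proof.
move=> jk0; have := upair_cardU j k; have := upair_cardU_le j k.
by rewrite jk0 cards0; lia.
Qed.

Unset Implicit Arguments. Set Strict Implicit. Set Printing Implicit Defensive.

Theorem lemma27 (R : rcfType) (N l : nat) (m : 'I_l -> nat)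
  (H : forall i, graph (m i)) (beta : 'I_l -> R)
  (X Y : graph N) (j k : upair N) :
  (forall e, e != k -> X e = Y e) -> X k != Y k ->
  let f := subgraph_count H beta in
  let n := 'C(N, 2) in
  (val j :&: val k != set0 ->
     `|dpart f j X - dpart f j Y| <=
       \sum_(i < l) 2%:R * `|beta i| * ((nedges (H i)) ^ 2)%:R / Num.sqrt n%:R)
  /\
  (val j :&: val k = set0 ->
     `|dpart f j X - dpart f j Y| <=
       \sum_(i < l) 6%:R * `|beta i| * ((nedges (H i)) ^ 2)%:R / n%:R).
Proof.
move=> XY _ f n; have [jk|j_neq_k] := eqVneq j k.
  rewrite -jk in XY; rewrite (dpart_agree _ XY) subrr normr0.
  by split=> _; apply: sumr_ge0 => i _; rewrite divr_ge0 ?sqrtr_ge0 ?mulr_ge0 ?ler0n.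
have -> : dpart f j X - dpart f j Y = \sum_(i < l) (N * N.-1)%:R *
    (beta i * (dpart (tdens R (H i)) j X - dpart (tdens R (H i)) j Y)).
  by rewrite !dpart_subgraph_count -mulrBr -sumrB mulr_sumr; apply: eq_bigr => i _; rewrite -mulrBr.
have c0 : 0 <= (N * N.-1)%:R :> R by rewrite ler0n.
have jk_val : val j != val k by rewrite (inj_eq val_inj).
have [J2 K2] := (valP j, valP k).
split=> JK; apply: le_trans (ler_norm_sum _ _ _) _; apply: ler_sum => i _.
- apply: (norm_scaled_term_le (K := 2%:R) (D := Num.sqrt n%:R) (P := N ^_ 3) (w := 1) _ c0
    (dpart_tdens_diff_le (H i) j R XY)).
  + apply: card_touching_le => a b _ _.
    by have := card_inj_onto_meet (val a) (val b) J2 K2 jk_val JK; rewrite !card_ord mul1n.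
  + by rewrite ffact_gt0 (upair_neq_ge3 j_neq_k).
  + exact: meet_coeff_le (upair_neq_ge3 j_neq_k).
- apply: (norm_scaled_term_le (K := 6%:R) (D := n%:R) (P := N ^_ 4) (w := 4) _ c0
    (dpart_tdens_diff_le (H i) j R XY)).
  + apply: card_touching_le => a b _ _.
    by have := card_inj_onto_disjoint (val a) (val b) J2 K2 JK; rewrite !card_ord.
  + by rewrite ffact_gt0 (upair_disjoint_ge4 JK).
  + exact: disjoint_coeff_le (upair_disjoint_ge4 JK).
Qed.
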